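(* For any $z\in\mathbb{R}^d$, $R>0$, $x\in B_{d,1}(z,R)$ and $0\le r\le 2R/(d+2)$, $$\lambda\big[B_{d,1}(z,R)\cap B_{d,2}(x,r)\big]\ge\frac{V_{d,1}}{V_{d,2}\,2^d}\,\lambda\big[B_{d,2}(x,r)\big].$$
   Context: $\lambda$ is Lebesgue measure on $\mathbb{R}^d$. For $p\ge1$, $B_{d,p}(x,r)=\{y\in\mathbb{R}^d:\sum_{j=1}^d|y_j-x_j|^p\le r^p\}$ is the closed $\ell_p$ ball, and $V_{d,p}=\lambda[B_{d,p}(0,1)]$. *)

From HB Require Import structures.
From mathcomp Require Import all_boot all_order all_algebra.
From mathcomp Require Import all_classical all_reals all_analysis.
Set Implicit Arguments. Unset Strict Implicit. Unset Printing Implicit Defensive.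
Import Order.TTheory GRing.Theory Num.Theory.
Local Open Scope classical_set_scope.
Local Open Scope ring_scope.

(* Points of R^d are row vectors 'rV[R]_d; coordinate j of y is y ord0 j. *)

Definition box (R : realType) (d : nat) (a b : 'I_d -> R) : set 'rV[R]_d :=
  [set y | forall j : 'I_d, a j <= y ord0 j <= b j].

Definition box_vol (R : realType) (d : nat) (a b : 'I_d -> R) : R :=
  \prod_(j < d) Num.max 0 (b j - a j).

(* d-dimensional Lebesgue (outer) measure: infimum of total volumes of
   countable box covers.  On Borel sets (all sets used below) it coincides
   with Lebesgue measure. *)
Definition lebesgue_d (R : realType) (d : nat) (A : set 'rV[R]_d) : \bar R :=
  ereal_inf [set s : \bar R | exists (a b : nat -> 'I_d -> R),
     A `<=` \bigcup_k box (a k) (b k) /\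
     s = (\sum_(0 <= k <oo) (box_vol (a k) (b k))%:E)%E].

Definition lp_ball (R : realType) (d : nat) (p : R) (x : 'rV[R]_d) (r : R)
  : set 'rV[R]_d :=
  [set y | \sum_(j < d) (`|y ord0 j - x ord0 j| `^ p) <= r `^ p].

Definition V (R : realType) (d : nat) (p : R) : \bar R :=
  lebesgue_d (lp_ball p (0 : 'rV[R]_d) 1).

From HB Require Import structures.
From mathcomp Require Import all_boot all_order all_algebra.
From mathcomp Require Import all_classical all_reals all_analysis.
From mathcomp Require Import ring lra.
Import Order.TTheory GRing.Theory Num.Theory.
Set Implicit Arguments. Unset Strict Implicit. Unset Printing Implicit Defensive.

Local Open Scope classical_set_scope.
Local Open Scope ring_scope.

(* Sliding [x] towards [z]
   yields a centre [y] with [|y - x|_1 <= r/2] and [B_1(y, r/2)] inside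
   [B_1(z, R)]; since [|.|_2 <= |.|_1], that ball also lies in [B_2(x, r)].
   Translations and dilations map box covers to box covers, so
   [lambda B_1(y, r/2) >= (r/2)^d V_{d,1}] and [lambda B_2(x, r) <= r^d V_{d,2}],
   and the ratio of these two bounds is exactly the constant of the claim. *)

Section lebesgue_d.
Variables (R : realType) (d : nat).
Implicit Types A B : set 'rV[R]_d.

Lemma box_vol_ge0 (a b : 'I_d -> R) : 0 <= box_vol a b.
Proof. by apply: prodr_ge0 => j _; rewrite le_max lexx. Qed.

Lemma lebesgue_d_ge0 A : (0 <= lebesgue_d A)%E.
Proof.
apply: le_ereal_inf_tmp => _ [a [b [_ ->]]].
by apply: nneseries_ge0 => n _ _; rewrite lee_fin box_vol_ge0.
Qed.

Lemma le_lebesgue_d A B : A `<=` B -> (lebesgue_d A <= lebesgue_d B)%E.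
Proof.
move=> AB; apply: ereal_inf_le_tmp => _ [a [b [cov ->]]].
by exists a, b; split => //; exact: subset_trans cov.
Qed.

Lemma lebesgue_d_affine_le (c : R) (t : 'rV[R]_d) A B : 0 < c ->
  B `<=` [set c *: y + t | y in A] ->
  (lebesgue_d B <= (c ^+ d)%:E * lebesgue_d A)%E.
Proof.
move=> c0 BcA; rewrite -ereal_inf_pZl ?exprn_gt0 //.
apply: ereal_inf_le_tmp => _ [s [a [b [cov ->]]] <-].
exists (fun k j => c * a k j + t ord0 j), (fun k j => c * b k j + t ord0 j).
split.
  move=> w /BcA [y /cov [k _ yk] <-]; exists k => // j.
  have /andP[aj bj] := yk j; rewrite !mxE.
  by rewrite !lerD2r !ler_pM2l // aj bj.
rewrite -nneseriesZl; last by move=> i _; rewrite lee_fin box_vol_ge0.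
apply: eq_eseriesr => k _; congr (_%:E).
have -> : c ^+ d = \prod_(j < d) c by rewrite prodr_const card_ord.
rewrite /box_vol -big_split /=.
apply: eq_bigr => j _.
rewrite (maxr_pMr _ _ (ltW c0)) mulr0; congr (Num.max _ _); ring.
Qed.

Lemma lebesgue_d_sub_set1 (t : 'rV[R]_d) B : (0 < d)%N ->
  B `<=` [set t] -> lebesgue_d B = 0%E.
Proof.
move=> d0 Bt; apply/le_anti; rewrite lebesgue_d_ge0 andbT.
apply: ereal_inf_lbound; exists (fun _ j => t ord0 j), (fun _ j => t ord0 j).
split; first by move=> w /Bt ->; exists 0%N => // j; rewrite lexx.
rewrite eseries0 // => i _ _; congr (_%:E).
by rewrite /box_vol (bigD1 (Ordinal d0)) //= subrr maxxx mul0r.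
Qed.

End lebesgue_d.

Section lp_balls.
Variables (R : realType) (d : nat).
Implicit Types (u v w x y z : 'rV[R]_d) (r s : R).

Definition l1_dist u v := \sum_(j < d) `|u ord0 j - v ord0 j|.
Definition sq_l2_dist u v := \sum_(j < d) (u ord0 j - v ord0 j) ^+ 2.

Lemma l1_dist_ge0 u v : 0 <= l1_dist u v.
Proof. by apply: sumr_ge0 => j _; exact: normr_ge0. Qed.

Lemma l1_distC u v : l1_dist u v = l1_dist v u.
Proof. by apply: eq_bigr => j _; rewrite distrC. Qed.

Lemma l1_dist_triangle u v w : l1_dist u w <= l1_dist u v + l1_dist v w.
Proof.
rewrite /l1_dist -big_split /=; apply: ler_sum => j _.
by rewrite -[u ord0 j - _](subrKA (v ord0 j)) ler_normD.
Qed.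

Lemma sq_l2_dist_le u v : sq_l2_dist u v <= l1_dist u v ^+ 2.
Proof.
rewrite /sq_l2_dist expr2 big_distrl /=; apply: ler_sum => j _.
rewrite -real_normK ?num_real // expr2 ler_wpM2l //.
by rewrite /l1_dist (bigD1 j) //= lerDl sumr_ge0 // => i _.
Qed.

Lemma lp_ball1E x r y : 0 <= r -> lp_ball 1 x r y <-> l1_dist y x <= r.
Proof.
move=> r0; rewrite /lp_ball /= powRr1 //.
by under eq_bigr do rewrite powRr1 //.
Qed.

Lemma lp_ball2E x r y : 0 <= r -> lp_ball 2 x r y <-> sq_l2_dist y x <= r ^+ 2.
Proof.
move=> r0; rewrite /lp_ball /= powR_mulrn //.
by under eq_bigr do rewrite powR_mulrn // real_normK ?num_real //.
Qed.

Lemma lp_ball_scaleE (p r : R) x w : 0 < r ->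
  lp_ball p x r (r *: w + x) <-> lp_ball p 0 1 w.
Proof.
move=> r0; rewrite /lp_ball /= powR1.
have e j : `|(r *: w + x) ord0 j - x ord0 j| `^ p
    = r `^ p * `|w ord0 j - (0 : 'rV[R]_d) ord0 j| `^ p.
  by rewrite !mxE addrK subr0 normrM gtr0_norm // powRM // ltW.
under eq_bigr do rewrite e.
by rewrite -big_distrr /= -[X in _ <= X]mulr1 ler_pM2l ?powR_gt0.
Qed.

Lemma lp_ball0 (p : R) x : 0 < p -> lp_ball p x 0 `<=` [set x].
Proof.
move=> p0 y; rewrite /lp_ball /= powR0 ?gt_eqF // => y0.
have /psumr_eq0P y_eq : \sum_(j < d) `|y ord0 j - x ord0 j| `^ p = 0.
  by apply/le_anti; rewrite y0 sumr_ge0 // => j _; exact: powR_ge0.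
apply/rowP => j; apply/eqP; rewrite -subr_eq0 -normr_eq0.
by apply/eqP/(@powR_eq0_eq0 _ _ p)/y_eq => // i _; exact: powR_ge0.
Qed.

(* Slide [x] towards [z] until its l1 distance to [z] drops to [Rad - rho]. *)
Lemma exists_l1_ball_inside x z (Rad rho : R) : 0 <= rho -> rho <= Rad ->
  l1_dist x z <= Rad ->
  exists y, lp_ball 1 y rho `<=` lp_ball 1 z Rad /\ l1_dist y x <= rho.
Proof.
move=> rho0 rhoR xz.
suff [y [yz yx]] : exists y, l1_dist y z <= Rad - rho /\ l1_dist y x <= rho.
  exists y; split => // u /(lp_ball1E _ _ rho0) uy.
  apply/lp_ball1E; first lra.
  by apply: le_trans (l1_dist_triangle u y z) _; lra.
set s := l1_dist x z.
have [near|far] := leP s (Rad - rho).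
  by exists x; rewrite /l1_dist [X in X <= rho]big1 // => j _; rewrite subrr normr0.
have s0 : 0 < s by apply: le_lt_trans far; rewrite subr_ge0.
set t := (s - (Rad - rho)) / s.
have t0 : 0 <= t by rewrite divr_ge0 ?(ltW s0) // subr_ge0 ltW.
have tK : 1 - t = (Rad - rho) / s by rewrite /t; field; rewrite gt_eqF.
exists (x + t *: (z - x)); split.
  have e j : (x + t *: (z - x)) ord0 j - z ord0 j = (1 - t) * (x ord0 j - z ord0 j).
    by rewrite !mxE; ring.
  rewrite /l1_dist; under eq_bigr do rewrite e normrM.
  rewrite -big_distrr /= -/(l1_dist x z) -/s tK ger0_norm; last first.
    by rewrite divr_ge0 ?(ltW s0) // subr_ge0.
  by rewrite divfK ?gt_eqF.
have e j : (x + t *: (z - x)) ord0 j - x ord0 j = t * (z ord0 j - x ord0 j).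
  by rewrite !mxE; ring.
rewrite /l1_dist; under eq_bigr do rewrite e normrM.
rewrite -big_distrr /= -/(l1_dist z x) l1_distC -/s ger0_norm // /t divfK ?gt_eqF //.
by move: xz; rewrite -/s; lra.
Qed.

Lemma lp_ball1_sub_lp_ball2 x y s r : 0 <= s -> s + l1_dist y x <= r ->
  lp_ball 1 y s `<=` lp_ball 2 x r.
Proof.
move=> s0 sr u /(lp_ball1E _ _ s0) uy.
have yx0 := l1_dist_ge0 y x; have ux0 := l1_dist_ge0 u x.
apply/lp_ball2E; first lra.
apply: le_trans (sq_l2_dist_le u x) _.
have := l1_dist_triangle u y x; nra.
Qed.

End lp_balls.

Section lp_ball_measure.
Variables (R : realType) (d : nat) (p : R).
Hypothesis d0 : (0 < d)%N.

Lemma lebesgue_d_lp_ball_le (x : 'rV[R]_d) (r : R) : 0 < p -> 0 <= r ->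
  (lebesgue_d (lp_ball p x r) <= (r ^+ d)%:E * V d p)%E.
Proof.
move=> p0; rewrite le_eqVlt => /predU1P[<-|r0].
  by rewrite (lebesgue_d_sub_set1 d0 (lp_ball0 p0)) expr0n gtn_eqF // mul0e.
apply: (@lebesgue_d_affine_le _ _ r x) => // w w_in.
have wE : w = r *: (r^-1 *: (w - x)) + x.
  by rewrite scalerA mulfV ?gt_eqF // scale1r subrK.
exists (r^-1 *: (w - x)); last by rewrite -wE.
by apply/(lp_ball_scaleE _ x _ r0); rewrite -wE.
Qed.

Lemma lebesgue_d_lp_ball_ge (y : 'rV[R]_d) (r : R) : 0 <= r ->
  ((r ^+ d)%:E * V d p <= lebesgue_d (lp_ball p y r))%E.
Proof.
rewrite le_eqVlt => /predU1P[<-|r0].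
  by rewrite expr0n gtn_eqF // mul0e lebesgue_d_ge0.
rewrite -lee_pdivlMl ?exprn_gt0 // -exprVn.
apply: (@lebesgue_d_affine_le _ _ r^-1 (- (r^-1 *: y))); first by rewrite invr_gt0.
move=> w w_in; exists (r *: w + y); first exact/lp_ball_scaleE.
by rewrite scalerDr scalerA mulVf ?gt_eqF // scale1r addrK.
Qed.

End lp_ball_measure.

(* With [fine] sending [+oo] to [0], the ratio [a / b] may undershoot but never overshoots. *)
Lemma fine_ratio_mule_le (R : realType) (a b : \bar R) (k s : R) :
  (0 <= a)%E -> (0 <= b)%E -> 0 < k -> 0 <= s ->
  ((fine a / (fine b * k))%:E * ((k * s)%:E * b) <= s%:E * a)%E.
Proof.
move=> a0 b0 k0 s0; have sa0 : (0 <= s%:E * a)%E by exact: mule_ge0.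
case: b b0 => [b||] //= b0; last by rewrite mul0r invr0 mulr0 mul0e.
case: a a0 sa0 => [a||] //= a0 sa0; last by rewrite mul0r mul0e.
rewrite -!EFinM lee_fin.
have [->|bn0] := eqVneq b 0; first by rewrite !(mulr0, mul0r, invr0) mulr_ge0.
by rewrite le_eqVlt; apply/orP; left; apply/eqP; field; rewrite bn0 gt_eqF.
Qed.

Theorem lemmaC1 (R : realType) (d : nat) (z x : 'rV[R]_d) (Rad r : R) :
  (0 < d)%N -> 0 < Rad ->
  lp_ball 1 z Rad x ->
  0 <= r -> r <= 2 * Rad / (d%:R + 2) ->
  (lebesgue_d (lp_ball 1 z Rad `&` lp_ball 2 x r) >=
   (fine (V d 1) / (fine (V d 2) * 2 ^+ d))%:E * lebesgue_d (lp_ball 2 x r))%E.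
Proof.
move=> d0 Rad0 /(lp_ball1E _ _ (ltW Rad0)) xz r0 r_le.
have rho0 : 0 <= r / 2 by rewrite divr_ge0.
have rhoR : r / 2 <= Rad.
  have dR0 : 0 <= d%:R :> R by rewrite ler0n.
  move: r_le; rewrite ler_pdivlMr; last by lra.
  by nra.
have [y [yz yx]] := exists_l1_ball_inside rho0 rhoR xz.
have yr : lp_ball 1 y (r / 2) `<=` lp_ball 1 z Rad `&` lp_ball 2 x r.
  move=> u uy; split; first exact: yz.
  by apply: lp_ball1_sub_lp_ball2 uy => //; lra.
apply: le_trans (le_lebesgue_d yr).
apply: le_trans (lebesgue_d_lp_ball_ge 1 d0 y rho0).
apply: le_trans (lee_wpmul2l _ (lebesgue_d_lp_ball_le d0 x (ltr0Sn _ 1) r0)) _.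
  by rewrite lee_fin divr_ge0 ?mulr_ge0 ?exprn_ge0 ?fine_ge0 ?lebesgue_d_ge0.
have -> : r ^+ d = 2 ^+ d * (r / 2) ^+ d by rewrite -exprMn mulrC divfK.
by apply: fine_ratio_mule_le; rewrite ?lebesgue_d_ge0 ?exprn_gt0 ?exprn_ge0.
Qed.
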